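(* Suppose the setting below holds with step sizes $\gamma_k = A/k^{\alpha}$ for all $k\ge 1$, where $\alpha\in(0,1]$ and $A>0$ with $\gamma_k\in(0,1]$ for all $k$. Then for every agent $i\in[m]$, $\|x_i^k-\bar x^k\| = \mathcal{O}(1/k^{\alpha})$ as $k\to\infty$.
   Context: Setting. Problem: minimize $F(x)=\frac1m\sum_{i=1}^m f_i(x)$ over $x\in\Omega\subset\mathbb{R}^d$, where $f_i(x)=\frac1{n_i}\sum_{j=1}^{n_i} f_{i,j}(x)$; agent $i$ only knows $f_i$. Assumption 1: $\Omega$ is nonempty, convex and compact with diameter $\bar\rho=\max_{x,\hat x\in\Omega}\|x-\hat x\|$. Standing regularity: each $f_{i,j}$ is differentiable and $L$-smooth (gradient $L$-Lipschitz) on a neighborhood of $\Omega$, each $f_i$ is $G$-Lipschitz on $\Omega$, and $\|\nabla f_i(x)\|\le C$ for all $x\in\Omega$. Assumption 2: the $m$ agents communicate over a connected undirected graph; $W\in\mathbb{R}^{m\times m}$ is symmetric, has nonnegative entries, $W_{ij}=0$ unless $i=j$ or $\{i,j\}$ is an edge, and is doubly stochastic ($W\mathbf 1=W^\top\mathbf 1=\mathbf 1$); moreover $\lambda_2(W)$, the largest modulus of the eigenvalues of $W$ other than the simple eigenvalue $1$ (equivalently $\|W-\frac1m\mathbf 1\mathbf 1^\top\|_2$), satisfies $|\lambda_2(W)|<1$. Algorithm DstoFW with step sizes $\gamma_k\in(0,1]$, epoch length $q\in\mathbb{Z}^+$ and sample sizes $|S^k|$: initialize $x_i^1\in\Omega$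 and $d_i^1=v_i^1=g_i^1=\nabla f_i(x_i^1)$. For $k=1,2,\dots$ each agent $i$ computes: $\overline{x_i^k}=\sum_{j=1}^m W_{ij}x_j^k$; $u_i^k\in\arg\min_{u\in\Omega}\langle u,d_i^k\rangle$; $x_i^{k+1}=(1-\gamma_k)\overline{x_i^k}+\gamma_k u_i^k$; if $(k+1)\bmod q=0$ then $v_i^{k+1}=\frac1{n_i}\sum_{j=1}^{n_i}\nabla f_{i,j}(x_i^{k+1})$, otherwise a sample set $S^k$ of indices from $[n_i]$ is drawn uniformly at random (independently of the past) and $v_i^{k+1}=\frac1{|S^k|}\sum_{j\in S^k}[\nabla f_{i,j}(x_i^{k+1})-\nabla f_{i,j}(x_i^k)]+v_i^k$; then $g_i^{k+1}=d_i^k+v_i^{k+1}-v_i^k$ and $d_i^{k+1}=\sum_{j=1}^m W_{ij}g_j^{k+1}$. Notation: $\bar x^k=\frac1m\sum_i x_i^k$. *)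

From HB Require Import structures.
From mathcomp Require Import all_boot all_order all_algebra.
From mathcomp Require Import all_classical all_reals all_analysis.
Set Implicit Arguments. Unset Strict Implicit. Unset Printing Implicit Defensive.
Import Order.TTheory GRing.Theory Num.Theory.
Import numFieldNormedType.Exports.
Local Open Scope classical_set_scope.
Local Open Scope ring_scope.

Definition dotv {R : realType} {dim : nat} (u w : 'rV[R]_dim) : R :=
  \sum_(j < dim) u 0 j * w 0 j.
Definition enorm {R : realType} {dim : nat} (u : 'rV[R]_dim) : R :=
  Num.sqrt (dotv u u).

Definition convex_set_rV {R : realType} {dim : nat} (O : set 'rV[R]_dim) :=
  forall x y t, O x -> O y -> 0 <= t <= 1 -> O ((1 - t) *: x + t *: y).

(* Spectral (Euclidean-operator) norm of a square matrix:
   sup { ||y M|| : ||y|| = 1 }  (W symmetric, so row/column action agree). *)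
Definition opnorm2 {R : realType} {m : nat} (M : 'M[R]_m) : R :=
  sup [set enorm (y *m M) | y in [set y : 'rV[R]_m | enorm y = 1]].

Definition avgmx {R : realType} (m : nat) : 'M[R]_m :=
  \matrix_(i, j) (m%:R)^-1.

Definition fullgrad {R : realType} {dim k : nat}
  (gf : 'I_k -> 'rV[R]_dim -> 'rV[R]_dim) (y : 'rV[R]_dim) : 'rV[R]_dim :=
  (k%:R)^-1 *: \sum_(j < k) gf j y.

Definition mix {R : realType} {dim m : nat} (W : 'M[R]_m)
  (z : 'I_m -> 'rV[R]_dim) (i : 'I_m) : 'rV[R]_dim :=
  \sum_(j < m) W i j *: z j.

Definition netavg {R : realType} {dim m : nat} (z : 'I_m -> 'rV[R]_dim)
  : 'rV[R]_dim := (m%:R)^-1 *: \sum_(i < m) z i.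

From HB Require Import structures.
From mathcomp Require Import all_boot all_order all_algebra.
From mathcomp Require Import all_classical all_reals all_analysis.
From mathcomp Require Import ring lra.
Import Order.TTheory GRing.Theory Num.Theory.
Import numFieldNormedType.Exports.
Local Open Scope classical_set_scope.
Local Open Scope ring_scope.

Set Implicit Arguments. Unset Strict Implicit.

(* Only the mixing part of the iteration matters.  For each coordinate c, the
   vector z_k = (x_i^k(c) - xbar^k(c))_i of consensus errors satisfies, since W
   is symmetric and doubly stochastic,
     z_{k+1} = (1 - gamma_k) z_k (W - 11^T/m) + gamma_k (consensus error of u^k),
   and the last term is bounded because every u_i^k lies in the compact set
   Omega.  Hence e_k = sum_c ||z_k|| obeys e_{k+1} <= rho e_k + b / k^alpha with
   rho = ||W - 11^T/m|| < 1, and such a recursion forces e_k = O(1/k^alpha)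
   because k^alpha grows at most linearly, far slower than the geometric
   contraction. *)

Section EuclideanNorm.
Variables (R : realType) (n : nat).
Implicit Types u w : 'rV[R]_n.

Lemma dotv_ge0 u : 0 <= dotv u u.
Proof. by apply: sumr_ge0 => j _; rewrite -expr2 sqr_ge0. Qed.

Lemma enorm_ge0 u : 0 <= enorm u.
Proof. exact: sqrtr_ge0. Qed.

Lemma enorm0 : enorm (0 : 'rV[R]_n) = 0.
Proof. by rewrite /enorm /dotv big1 ?sqrtr0 // => j _; rewrite mxE mul0r. Qed.

Lemma enormZ a u : enorm (a *: u) = `|a| * enorm u.
Proof.
rewrite /enorm -sqrtr_sqr -sqrtrM ?sqr_ge0 //; congr Num.sqrt.
by rewrite /dotv mulr_sumr; apply: eq_bigr => j _; rewrite !mxE; ring.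
Qed.

Lemma norm_entry_le_enorm u j : `|u 0 j| <= enorm u.
Proof.
rewrite -sqrtr_sqr /enorm ler_wsqrtr // /dotv (bigD1 j) //= expr2 lerDl.
by apply: sumr_ge0 => i _; rewrite -expr2 sqr_ge0.
Qed.

Lemma enorm_eq0 u : enorm u = 0 -> u = 0.
Proof.
move=> u0; apply/rowP => j; rewrite mxE; apply/normr0_eq0/eqP.
by rewrite eq_le normr_ge0 andbT -u0 norm_entry_le_enorm.
Qed.

Lemma sum_sqr_le_sqr_sum_norm (F : 'I_n -> R) :
  \sum_j F j ^+ 2 <= (\sum_j `|F j|) ^+ 2.
Proof.
elim: n F => [|k IH] F; first by rewrite !big_ord0 expr0n.
rewrite !big_ord_recr /=.
have := IH (fun j => F (widen_ord (leqnSn k) j)).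
have : 0 <= \sum_(i < k) `|F (widen_ord (leqnSn k) i)| by apply: sumr_ge0.
have := normr_ge0 (F ord_max).
rewrite -[F ord_max ^+ 2]real_normK ?num_real //; nra.
Qed.

Lemma enorm_le_sum_norm u : enorm u <= \sum_j `|u 0 j|.
Proof.
rewrite /enorm -[X in _ <= X]ger0_norm ?sumr_ge0 // -sqrtr_sqr ler_wsqrtr //.
rewrite /dotv; under eq_bigr do rewrite -expr2.
exact: sum_sqr_le_sqr_sum_norm.
Qed.

Lemma dotvDD u w :
  dotv (u + w) (u + w) = dotv u u + 2 * dotv u w + dotv w w.
Proof.
by rewrite /dotv mulr_sumr -!big_split /=; apply: eq_bigr => j _; rewrite !mxE; ring.
Qed.

Lemma dotv_cauchy_schwarz u w : dotv u w ^+ 2 <= dotv u u * dotv w w.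
Proof.
have [u0|u_neq0] := eqVneq (dotv u u) 0.
  have -> : dotv u w = 0.
    rewrite /dotv big1 // => j _.
    have /eqP : u 0 j * u 0 j = 0.
      by apply: (psumr_eq0P _ u0) => // i _; rewrite -expr2 sqr_ge0.
    by rewrite mulf_eq0 orbb => /eqP ->; rewrite mul0r.
  by rewrite u0 expr0n mul0r.
have u_gt0 : 0 < dotv u u by rewrite lt0r u_neq0 dotv_ge0.
(* expand 0 <= <t u + w, t u + w> at the minimizing t = - <u,w> / <u,u> *)
set t := - (dotv u w / dotv u u).
have := dotv_ge0 (t *: u + w); rewrite dotvDD.
have -> : dotv (t *: u) (t *: u) = t ^+ 2 * dotv u u.
  by rewrite /dotv mulr_sumr; apply: eq_bigr => j _; rewrite !mxE; ring.
have -> : dotv (t *: u) w = t * dotv u w.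
  by rewrite /dotv mulr_sumr; apply: eq_bigr => j _; rewrite !mxE; ring.
have -> : t ^+ 2 * dotv u u + 2 * (t * dotv u w) = - (dotv u w ^+ 2 / dotv u u).
  by rewrite /t; field; rewrite gt_eqF.
by rewrite addrC subr_ge0 ler_pdivrMr // [dotv w w * _]mulrC.
Qed.

Lemma enormD u w : enorm (u + w) <= enorm u + enorm w.
Proof.
have u0 := enorm_ge0 u; have w0 := enorm_ge0 w.
rewrite /enorm -[X in _ <= X]ger0_norm ?addr_ge0 // -sqrtr_sqr ler_wsqrtr //.
rewrite dotvDD.
have cs : dotv u w <= Num.sqrt (dotv u u) * Num.sqrt (dotv w w).
  rewrite -sqrtrM ?dotv_ge0 //; apply: le_trans (ler_norm _) _.
  by rewrite -sqrtr_sqr ler_wsqrtr // dotv_cauchy_schwarz.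
have := sqr_sqrtr (dotv_ge0 u); have := sqr_sqrtr (dotv_ge0 w).
rewrite /enorm in u0 w0; nra.
Qed.

End EuclideanNorm.

Section OperatorNorm.
Variables (R : realType) (m : nat) (M : 'M[R]_m).

Lemma enorm_mulmx_le (y : 'rV[R]_m) : enorm (y *m M) <= opnorm2 M * enorm y.
Proof.
have [y0|y_neq0] := eqVneq (enorm y) 0.
  by rewrite (enorm_eq0 y0) mul0mx enorm0 mulr0.
have y_gt0 : 0 < enorm y by rewrite lt0r y_neq0 enorm_ge0.
have ub : has_ubound [set enorm (y *m M) | y in [set y : 'rV[R]_m | enorm y = 1]].
  exists (\sum_i \sum_j `|M j i|) => _ [z /= z1 <-].
  apply: le_trans (enorm_le_sum_norm _) _; apply: ler_sum => i _.
  rewrite mxE; apply: le_trans (ler_norm_sum _ _ _) _; apply: ler_sum => j _.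
  by rewrite normrM ler_piMl // -z1 norm_entry_le_enorm.
have unit_y : enorm ((enorm y)^-1 *: y) = 1.
  by rewrite enormZ ger0_norm ?invr_ge0 ?enorm_ge0 // mulVf.
have := ub_le_sup ub (ex_intro2 _ _ _ unit_y erefl).
rewrite -/(opnorm2 M) -scalemxAl enormZ ger0_norm ?invr_ge0 ?enorm_ge0 //.
by rewrite ler_pdivrMl // mulrC.
Qed.

Lemma opnorm2_ge0 : (0 < m)%N -> 0 <= opnorm2 M.
Proof.
move=> m_gt0; pose y : 'rV[R]_m := delta_mx 0 (Ordinal m_gt0).
have y_ge1 : 1 <= enorm y.
  by have := norm_entry_le_enorm y (Ordinal m_gt0); rewrite mxE !eqxx normr1.
have := le_trans (enorm_ge0 _) (enorm_mulmx_le y).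
by rewrite pmulr_lge0 // (lt_le_trans ltr01 y_ge1).
Qed.

End OperatorNorm.

Section ConsensusError.
Variables (R : realType) (dim m : nat).
Implicit Types (z u : 'I_m -> 'rV[R]_dim) (W : 'M[R]_m) (c : 'I_dim) (g M : R).

Definition consensus_error z (c : 'I_dim) : 'rV[R]_m :=
  \row_i (z i 0 c - netavg z 0 c).

Lemma netavgE z c : netavg z 0 c = m%:R^-1 * \sum_i z i 0 c.
Proof. by rewrite /netavg mxE summxE. Qed.

Lemma mixE W z i c : mix W z i 0 c = \sum_j W i j * z j 0 c.
Proof. by rewrite /mix summxE; apply: eq_bigr => j _; rewrite mxE. Qed.

Lemma enorm_sub_netavg_le z i :
  enorm (z i - netavg z) <= \sum_c enorm (consensus_error z c).
Proof.
apply: le_trans (enorm_le_sum_norm _) _; apply: ler_sum => c _.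
by have := norm_entry_le_enorm (consensus_error z c) i; rewrite !mxE.
Qed.

Hypothesis m_gt0 : (0 < m)%N.

Lemma norm_netavg_le z c M :
  (forall j, `|z j 0 c| <= M) -> `|netavg z 0 c| <= M.
Proof.
move=> zM; have m_pos : 0 < m%:R :> R by rewrite ltr0n.
rewrite netavgE normrM ger0_norm ?invr_ge0 ?ler0n // ler_pdivrMl //.
apply: le_trans (ler_norm_sum _ _ _) _.
apply: le_trans (_ : _ <= \sum_(j < m) M) _; first by apply: ler_sum.
by rewrite sumr_const card_ord mulr_natl.
Qed.

Lemma enorm_consensus_error_le z c M :
  (forall j, `|z j 0 c| <= M) -> enorm (consensus_error z c) <= m%:R * (2 * M).
Proof.
move=> zM; apply: le_trans (enorm_le_sum_norm _) _.
rewrite mulr_natl -[m in _ *+ m]card_ord -sumr_const; apply: ler_sum => j _.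
rewrite mxE mulr_natl mulr2n; apply: le_trans (ler_normB _ _) _.
by rewrite lerD ?norm_netavg_le.
Qed.

Variable W : 'M[R]_m.
Hypotheses (W_sym : W^T = W) (W_row : forall i, \sum_j W i j = 1)
  (W_col : forall j, \sum_i W i j = 1).

(* Column sums 1 preserve the network average through mixing, and symmetry with
   row sums 1 lets the deviation from the average be written via W - avgmx m. *)
Lemma consensus_error_step z z' u g c :
  (forall i, z' i = (1 - g) *: mix W z i + g *: u i) ->
  consensus_error z' c =
  (1 - g) *: (consensus_error z c *m (W - avgmx m)) + g *: consensus_error u c.
Proof.
move=> z'E.
have m_neq0 : m%:R != 0 :> R by rewrite pnatr_eq0 -lt0n.
have sum_inv_m : \sum_(j < m) m%:R^-1 = 1 :> R.
  by rewrite sumr_const card_ord -[X in X *+ _ = _]mulr1 -mulrnAr mulVf.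
set zbar := m%:R^-1 * \sum_j z j 0 c.
set ubar := m%:R^-1 * \sum_j u j 0 c.
have avg_step : netavg z' 0 c = (1 - g) * zbar + g * ubar.
  rewrite netavgE.
  have -> : \sum_i z' i 0 c = (1 - g) * \sum_j z j 0 c + g * \sum_j u j 0 c.
    under eq_bigr do rewrite z'E !mxE mixE.
    rewrite big_split /= -!mulr_sumr exchange_big /=; congr (_ * _ + _).
    by apply: eq_bigr => j _; rewrite -mulr_suml W_col mul1r.
  by rewrite /zbar /ubar; ring.
rewrite /consensus_error avg_step !netavgE -/zbar -/ubar.
apply/rowP => i; rewrite !mxE z'E !mxE mixE.
under [X in _ = _ * X + _]eq_bigr do rewrite !mxE.
have -> : \sum_j (z j 0 c - zbar) * (W j i - m%:R^-1)
        = \sum_j W i j * z j 0 c - zbar.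
  have Wji j : W j i = W i j by rewrite -[in LHS]W_sym mxE.
  under eq_bigr do rewrite Wji.
  have -> : \sum_j (z j 0 c - zbar) * (W i j - m%:R^-1)
     = \sum_j (W i j * z j 0 c - zbar * W i j - m%:R^-1 * z j 0 c + zbar * m%:R^-1).
    by apply: eq_bigr => j _; ring.
  by rewrite !big_split /= !sumrN -!mulr_sumr -/zbar sum_inv_m W_row; ring.
by ring.
Qed.

Lemma enorm_consensus_error_step z z' u g c M :
  0 <= g <= 1 -> (forall j, `|u j 0 c| <= M) ->
  (forall i, z' i = (1 - g) *: mix W z i + g *: u i) ->
  enorm (consensus_error z' c) <=
  opnorm2 (W - avgmx m) * enorm (consensus_error z c) + g * (m%:R * (2 * M)).
Proof.
move=> /andP[g0 g1] uM z'E; rewrite (consensus_error_step c z'E).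
apply: le_trans (enormD _ _) _; rewrite !enormZ ger0_norm ?subr_ge0 // ger0_norm //.
have rho_e_ge0 := mulr_ge0 (opnorm2_ge0 (W - avgmx m) m_gt0)
  (enorm_ge0 (consensus_error z c)).
apply: lerD; last by rewrite ler_wpM2l ?enorm_consensus_error_le.
apply: le_trans (ler_wpM2l _ (enorm_mulmx_le _ _)) _; first by rewrite subr_ge0.
by rewrite ler_piMl // gerBl.
Qed.

End ConsensusError.

Lemma powR_succ_mul_le (R : realType) (alpha : R) k : alpha <= 1 -> (1 <= k)%N ->
  (k.+1%:R `^ alpha) * k%:R <= (k%:R + 1) * (k%:R `^ alpha).
Proof.
move=> a1 k1; have k_gt0 : 0 < k%:R :> R by rewrite ltr0n.
set r : R := (k%:R + 1) / k%:R.
have r_ge1 : 1 <= r by rewrite ler_pdivlMr // mul1r lerDl.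
have -> : k.+1%:R = k%:R * r :> R by rewrite /r mulrC divfK ?gt_eqF // -natr1.
rewrite powRM ?ler0n ?(le_trans ler01 r_ge1) //.
have ralpha : r `^ alpha * k%:R <= k%:R + 1.
  rewrite -ler_pdivlMr //; apply: le_trans (ler_powR r_ge1 a1) _.
  by rewrite powRr1 ?(le_trans ler01 r_ge1).
by rewrite -mulrA [X in _ <= X]mulrC ler_wpM2l ?powR_ge0.
Qed.

Lemma decay_invariant (R : realType) (rho b c k : R) :
  0 <= rho < 1 -> 0 <= b -> 4 * b <= c * (1 - rho) ->
  2 <= k * (1 - rho) -> 1 <= k -> (rho * c + b) * (k + 1) <= c * k.
Proof.
move=> /andP[r0 r1] b0 cb kr k1.
have c0 : 0 <= c by rewrite -(pmulr_lge0 _ (_ : 0 < 1 - rho)) ?subr_gt0 //; lra.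
have h1 : c * 2 <= c * (k * (1 - rho)) by rewrite ler_wpM2l.
have h2 : 4 * b * k <= c * (1 - rho) * k by rewrite ler_wpM2r //; lra.
have h3 : rho * c <= c by rewrite ler_piMl // ltW.
have h4 : b <= b * k by rewrite ler_peMr.
nra.
Qed.

(* Induction on e k <= c / P k from a K with K (1 - rho) >= 2: from there on
   the contraction absorbs both the perturbation and the growth factor
   (k + 1) / k of P (decay_invariant). *)
Lemma contraction_decay (R : realType) (e P : nat -> R) (rho b : R) :
  0 <= rho < 1 -> 0 <= b ->
  (forall k, (1 <= k)%N -> 0 < P k) ->
  (forall k, (1 <= k)%N -> P k.+1 * k%:R <= (k%:R + 1) * P k) ->
  (forall k, (1 <= k)%N -> e k.+1 <= rho * e k + b / P k) ->
  exists c K, forall k, (K <= k)%N -> e k <= c / P k.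
Proof.
move=> /andP[r0 r1] b0 P_gt0 P_succ e_succ.
have r_gt0 : 0 < 1 - rho by rewrite subr_gt0.
set K := (Num.Def.truncn (2 / (1 - rho))).+1.
have K_gt : 2 / (1 - rho) < K%:R := truncnS_gt _.
set c := Num.max (4 * b / (1 - rho)) (e K * P K).
have cb : 4 * b <= c * (1 - rho) by rewrite -ler_pdivrMr // le_max lexx.
have c_ge0 : 0 <= c by rewrite -(pmulr_lge0 _ r_gt0); lra.
exists c, K; elim => [|k IH]; first by rewrite leqn0.
rewrite leq_eqVlt => /orP[/eqP <-|Kk].
  by rewrite ler_pdivlMr ?P_gt0 // le_max lexx orbT.
have k1 : (1 <= k)%N := leq_trans (isT : (1 <= K)%N) Kk.
have Pk := P_gt0 _ k1.
have Pk1 := P_gt0 _ (leqW k1).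
have ek : e k <= c / P k := IH Kk.
have kr : 2 <= k%:R * (1 - rho).
  rewrite -ler_pdivrMr //; apply: le_trans (ltW K_gt) _; by rewrite ler_nat.
set X := rho * c + b.
have X_ge0 : 0 <= X by rewrite addr_ge0 ?mulr_ge0.
have eX : e k.+1 <= X / P k.
  apply: le_trans (e_succ _ k1) _.
  by rewrite /X mulrDl -mulrA lerD2r ler_wpM2l.
have XP : X * P k.+1 <= c * P k.
  rewrite -(ler_pM2r (_ : 0 < k%:R)) ?ltr0n //.
  apply: le_trans (_ : X * ((k%:R + 1) * P k) <= _).
    by rewrite -mulrA ler_wpM2l ?P_succ.
  rewrite mulrA [c * P k * _]mulrAC ler_wpM2r ?(ltW Pk) //.
  by apply: decay_invariant; rewrite ?ler1n // r0.
apply: le_trans eX _.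
by rewrite ler_pdivrMr // mulrAC ler_pdivlMr.
Qed.

Lemma compact_entry_bounded (R : realType) dim (O : set 'rV[R]_dim) :
  compact O -> exists2 M, 0 <= M & forall y, O y -> forall c, `|y 0 c| <= M.
Proof.
move=> /compact_bounded [M0 [_ HM]]; exists (`|M0| + 1) => [|y Oy c].
  by rewrite addr_ge0.
have M0_lt : M0 < `|M0| + 1 by rewrite (le_lt_trans (ler_norm M0)) // ltrDl.
have := HM _ M0_lt y Oy.
rewrite /= -[X in X <= _ -> _]/(mx_norm y) mx_normrE => /(le_trans _); apply.
exact: le_bigmax _ _ (0, c).
Qed.

Theorem theorem1 (R : realType) (dim m : nat) (n : 'I_m -> nat)
  (* objective data *)
  (f : forall i : 'I_m, 'I_(n i) -> 'rV[R]_dim -> R)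
  (gf : forall i : 'I_m, 'I_(n i) -> 'rV[R]_dim -> 'rV[R]_dim)
  (Omega : set 'rV[R]_dim) (L G C : R)
  (* network *)
  (E : rel 'I_m) (W : 'M[R]_m)
  (* algorithm parameters *)
  (q : nat) (A alpha : R) (gamma : nat -> R)
  (S : nat -> forall i : 'I_m, seq 'I_(n i))
  (* algorithm iterates *)
  (x dd v g u : nat -> 'I_m -> 'rV[R]_dim) :
  (0 < m)%N -> (forall i, 0 < n i)%N ->
  (* Assumption 1 *)
  Omega !=set0 -> convex_set_rV Omega -> compact Omega ->
  (* standing regularity: f_{ij} differentiable and L-smooth on an open
     neighbourhood of Omega, with gradient gf i j *)
  (exists U : set 'rV[R]_dim, open U /\ Omega `<=` U /\
     forall i j, forall y, U y ->
       differentiable (f i j) y /\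
       (forall w, 'D_w (f i j) y = dotv (gf i j y) w) /\
       (forall z, U z -> enorm (gf i j y - gf i j z) <= L * enorm (y - z))) ->
  (forall i y z, Omega y -> Omega z ->
     `| (n i)%:R^-1 * \sum_(j < n i) f i j y
        - (n i)%:R^-1 * \sum_(j < n i) f i j z | <= G * enorm (y - z)) ->
  (forall i y, Omega y -> enorm (fullgrad (gf i) y) <= C) ->
  (* Assumption 2 *)
  (forall i j, E i j = E j i) -> (forall i, ~~ E i i) ->
  (forall i j, connect E i j) ->
  W^T = W -> (forall i j, 0 <= W i j) ->
  (forall i j, i != j -> ~~ E i j -> W i j = 0) ->
  (forall i, \sum_(j < m) W i j = 1) -> (forall j, \sum_(i < m) W i j = 1) ->
  opnorm2 (W - avgmx m) < 1 ->
  (* step sizes gamma_k = A / k^alpha in (0,1] *)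
  0 < alpha <= 1 -> 0 < A ->
  (forall k, (1 <= k)%N -> gamma k = A / (k%:R `^ alpha)) ->
  (forall k, (1 <= k)%N -> 0 < gamma k <= 1) ->
  (0 < q)%N ->
  (* sample sets: arbitrary nonempty realizations *)
  (forall k i, (0 < size (S k i))%N) ->
  (* initialization *)
  (forall i, Omega (x 1%N i)) ->
  (forall i, dd 1%N i = fullgrad (gf i) (x 1%N i) /\
             v 1%N i = fullgrad (gf i) (x 1%N i) /\
             g 1%N i = fullgrad (gf i) (x 1%N i)) ->
  (* DstoFW iteration *)
  (forall k i, (1 <= k)%N ->
     [/\ Omega (u k i) /\ (forall w, Omega w -> dotv (u k i) (dd k i) <= dotv w (dd k i)),
         x k.+1 i = (1 - gamma k) *: mix W (x k) i + gamma k *: u k i,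
         v k.+1 i = (if (k.+1 %% q == 0)%N then fullgrad (gf i) (x k.+1 i)
                     else (size (S k i))%:R^-1 *:
                            \sum_(j <- S k i) (gf i j (x k.+1 i) - gf i j (x k i))
                          + v k i),
         g k.+1 i = dd k i + v k.+1 i - v k i &
         dd k.+1 i = mix W (g k.+1) i]) ->
  (* conclusion: ||x_i^k - xbar^k|| = O(1/k^alpha) *)
  forall i, exists (c : R) (K : nat), forall k, (K <= k)%N ->
    enorm (x k i - netavg (x k)) <= c / (k%:R `^ alpha).
Proof.
move=> m_gt0 _ _ _ Omega_compact _ _ _ _ _ _ W_sym _ _ W_row W_col W_contr
  /andP[_ alpha_le1] A_gt0 gammaE gamma01 _ _ _ _ iter i.
have [M M_ge0 OmegaM] := compact_entry_bounded Omega_compact.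
pose e k := \sum_(c < dim) enorm (consensus_error (x k) c).
pose b := A * \sum_(c < dim) m%:R * (2 * M).
have e_succ k : (1 <= k)%N -> e k.+1 <= opnorm2 (W - avgmx m) * e k + b / k%:R `^ alpha.
  move=> k1; rewrite /b mulrAC -gammaE // /e !mulr_sumr -big_split /=.
  apply: ler_sum => c _; apply: enorm_consensus_error_step => //.
  - by have /andP[/ltW -> ->] := gamma01 k k1.
  - by move=> j; have [[u_in _] _ _ _ _] := iter k j k1; exact: OmegaM u_in c.
  - by move=> j; have [_ -> _ _ _] := iter k j k1.
have [||||c [K decay]] := contraction_decay _ _ _ _ e_succ.
- by rewrite W_contr opnorm2_ge0.
- apply: mulr_ge0; first exact: ltW.
  by apply: sumr_ge0 => c _; rewrite mulr_ge0 ?ler0n ?mulr_ge0 // M_ge0.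
- by move=> k k1; rewrite powR_gt0 // ltr0n.
- by move=> k; exact: powR_succ_mul_le alpha_le1.
by exists c, K => k Kk; apply: le_trans (decay k Kk); apply: enorm_sub_netavg_le.
Qed.
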